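(* Let $G$ be a finite group with $n=|G|$, and let $f_1,f_2:G\to\{0,1\}$ be sceneries. If $A_{f_1}(x_1,\dots,x_n)=A_{f_2}(x_1,\dots,x_n)$ for all $(x_1,\dots,x_n)\in G^n$, then $f_1$ is a shift of $f_2$, i.e. there exists $g\in G$ with $f_1(k)=f_2(kg)$ for all $k\in G$.
   Context: For a scenery $f:G\to\{0,1\}$, the multispectrum (with $n$ arguments) is $A_f(x_1,\dots,x_n)=\sum_{k\in G}f(k)f(x_1k)f(x_2x_1k)\cdots f(x_n\cdots x_1k)$ for $x_1,\dots,x_n\in G$. *)

From mathcomp Require Import all_boot all_fingroup.
Set Implicit Arguments. Unset Strict Implicit. Unset Printing Implicit Defensive.
Local Open Scope group_scope.

(* A scenery is f : gT -> bool (bool coerces to nat: true = 1, false = 0). *)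

(* The points x_1 k, x_2 x_1 k, ..., x_n ... x_1 k for xs = [:: x_1; ...; x_n]. *)
Definition scenery_path (gT : finGroupType) (xs : seq gT) (k : gT) : seq gT :=
  scanl (fun acc x => x * acc) k xs.

Definition multispectrum (gT : finGroupType) (f : gT -> bool) (xs : seq gT) : nat :=
  (\sum_(k : gT) (f k : nat) * \prod_(y <- scenery_path xs k) (f y : nat))%N.

From mathcomp Require Import all_boot all_fingroup.
Set Implicit Arguments. Unset Strict Implicit. Unset Printing Implicit Defensive.
Local Open Scope group_scope.

(* Choosing the steps x_i = y_i y_(i-1)^-1 makes the path of k visit
   y_1 k, ..., y_m k, so A_f counts the k with k and all y_i k in the support
   of f; padding with y_i = 1 (which repeats k) gives all m <= n.  With no y_i
   this shows that the supports S1, S2 of f1, f2 have the same size.  For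
   a in S1, taking the y_i to be the elements of S1 a^-1 makes k = a counted
   for f1, hence some k is counted for f2: S1 a^-1 k is contained in S2, and
   equal cardinalities force S1 (a^-1 k) = S2. *)

Lemma prod_nat_of_bool (T : Type) (P : pred T) (s : seq T) :
  (\prod_(y <- s) (P y : nat) = all P s)%N.
Proof. by elim: s => [|y s IH]; rewrite ?big_nil ?big_cons //= IH mulnb. Qed.

Section Multispectrum.
Variable gT : finGroupType.

Fixpoint increments (p : gT) (ys : seq gT) : seq gT :=
  if ys is y :: ys' then y * p^-1 :: increments y ys' else [::].

Lemma size_increments p ys : size (increments p ys) = size ys.
Proof. by elim: ys p => //= y ys IH p; rewrite IH. Qed.

Lemma scanl_increments p ys k :
  scanl (fun acc x => x * acc) (p * k) (increments p ys) = [seq y * k | y <- ys].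
Proof. by elim: ys p => //= y ys IH p; rewrite mulgA mulgKV IH. Qed.

Lemma scenery_path_increments ys k :
  scenery_path (increments 1 ys) k = [seq y * k | y <- ys].
Proof. by rewrite /scenery_path -{1}[k]mul1g scanl_increments. Qed.

Definition support (f : gT -> bool) := [set k | f k].

Definition joint_support (f : gT -> bool) (ys : seq gT) :=
  [set k | f k & all (fun y => f (y * k)) ys].

Lemma multispectrum_increments (f : gT -> bool) ys :
  multispectrum f (increments 1 ys) = #|joint_support f ys|.
Proof.
rewrite /multispectrum -sum1_card [RHS]big_mkcond /=; apply: eq_bigr => k _.
rewrite scenery_path_increments big_map (prod_nat_of_bool (fun y => f (y * k))).
by rewrite inE mulnb; case: andP.
Qed.

Lemma joint_support_pad f ys m : joint_support f (ys ++ nseq m 1) = joint_support f ys.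
Proof.
apply/setP => k; rewrite !inE all_cat; case fk: (f k) => //=.
by rewrite all_nseq /= mul1g fk orbT andbT.
Qed.

Lemma joint_support_nil f : joint_support f [::] = support f.
Proof. by apply/setP => k; rewrite !inE andbT. Qed.

Section EqualMultispectra.
Variables f1 f2 : gT -> bool.
Hypothesis eq_ms :
  forall xs : #|gT|.-tuple gT, multispectrum f1 xs = multispectrum f2 xs.

Lemma card_joint_support_eq ys :
  (size ys <= #|gT|)%N -> #|joint_support f1 ys| = #|joint_support f2 ys|.
Proof.
move=> le_ys; pose ys' := ys ++ nseq (#|gT| - size ys) 1.
have size_xs : size (increments 1 ys') == #|gT|.
  by rewrite size_increments size_cat size_nseq subnKC.
have := eq_ms (Tuple size_xs); rewrite /= !multispectrum_increments.
by rewrite !joint_support_pad.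
Qed.

Lemma card_support_eq : #|support f1| = #|support f2|.
Proof. by rewrite -!joint_support_nil card_joint_support_eq. Qed.

Lemma support_rcoset_eq a : f1 a -> exists g, support f1 :* g = support f2.
Proof.
move=> f1a; pose ys := enum (support f1 :* a^-1).
have mem_ys y : (y \in ys) = (y * a \in support f1).
  by rewrite mem_enum mem_rcoset invgK.
have a_joint1 : a \in joint_support f1 ys.
  by rewrite inE f1a; apply/allP => y; rewrite mem_ys inE.
have : (0 < #|joint_support f2 ys|)%N.
  rewrite -card_joint_support_eq; last by rewrite -cardE max_card.
  by apply/card_gt0P; exists a.
case/card_gt0P=> k; rewrite inE => /andP[_ /allP f2_ysk].
exists (a^-1 * k); apply/eqP; rewrite eqEcard card_rcoset card_support_eq leqnn.
rewrite andbT; apply/subsetP => x; rewrite mem_rcoset => S1x; rewrite inE.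
have := f2_ysk (x * (a^-1 * k)^-1 * a^-1).
by rewrite mem_ys mulgKV -mulgA mulgKV; apply.
Qed.

End EqualMultispectra.
End Multispectrum.

Theorem mainTheorem6 (gT : finGroupType) (f1 f2 : gT -> bool) :
  (forall xs : #|gT|.-tuple gT, multispectrum f1 xs = multispectrum f2 xs) ->
  exists g : gT, forall k : gT, f1 k = f2 (k * g).
Proof.
move=> eq_ms; case: (pickP f1) => [a f1a | f1_0].
  have [g S1g_S2] := support_rcoset_eq eq_ms f1a.
  exists g => k; have := mem_rcoset (support f1) g (k * g).
  by rewrite S1g_S2 mulgK !inE => ->.
have S1_0 : support f1 = set0 by apply/setP => k; rewrite !inE f1_0.
have S2_0 : support f2 = set0.
  by apply/eqP; rewrite -cards_eq0 -(card_support_eq eq_ms) S1_0 cards0.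
exists 1 => k; have /setP/(_ (k * 1)) := S2_0.
by rewrite !inE f1_0 => ->.
Qed.
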